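(* (a) The map $\Phi$ is reversible with respect to the involution $\sigma(p,u)=(u,p)$: $\Phi^{-1}(p,u)=\sigma\circ\Phi(u,p)$ (wherever defined). (b) For the trajectory $T_n$ with coordinates $(p_j,u_j)$, $u_j=p_{n-j}$ for $0\le j\le n$; in particular $u_n=p_0$. (c) If $n=2k$ then $p_k=u_k$; if $n=2k-1$ then $p_{k-1}=u_k=1$.
   Context: $\Phi$ is the partial map of $\mathbb{R}^2$ defined for $p\ne0$ by $\Phi(p,u)=\bigl(p^2(u+1)-1,\ 1/p\bigr)$. For $n\ge1$, the trajectory $T_n$ is the (existing and unique) finite sequence $(p_j,u_j)$, $j=0,\dots,n$, with $(p_j,u_j)=\Phi(p_{j-1},u_{j-1})$ for $1\le j\le n$, $u_0=0$, $p_n=0$, and $p_j>0$ for $0\le j\le n-1$. *)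

From Stdlib Require Import Reals Lra Lia.
Open Scope R_scope.

(* Phi(p,u) = (p^2 (u+1) - 1, 1/p); only meaningful for p <> 0
   (Rinv 0 is an unspecified value; all statements guard p <> 0). *)
Definition Phi (x : R * R) : R * R :=
  let (p, u) := x in (p ^ 2 * (u + 1) - 1, / p).

Definition swap_sigma (x : R * R) : R * R := let (p, u) := x in (u, p).

Definition is_trajectory (n : nat) (p u : nat -> R) : Prop :=
  (1 <= n)%nat /\
  u 0%nat = 0 /\
  (forall j : nat, (1 <= j <= n)%nat ->
     (p j, u j) = Phi (p (j - 1)%nat, u (j - 1)%nat)) /\
  p n = 0 /\
  (forall j : nat, (j < n)%nat -> 0 < p j).

(* Reversibility, Phi (sigma (Phi x)) = sigma x, means that reading a trajectory
   backwards and swapping coordinates gives again a trajectory of the same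
   length. Trajectories are unique: if two of them start at p_0 < p'_0, the
   order p_j < p'_j, u'_j <= u_j, p_j u_j <= p'_j u'_j propagates along them
   and forces p_n / p_(n-1) < p'_n / p'_(n-1), impossible when p_n = p'_n = 0.
   Hence the reversed trajectory is the trajectory itself, which is (b), and
   (c) reads off its middle, using u_k = 1 / p_(k-1). *)
From Stdlib Require Import Reals Lra Lia.
Open Scope R_scope.

Lemma Phi_swap_Phi (p u : R) : p <> 0 -> Phi (swap_sigma (Phi (p, u))) = (u, p).
Proof. intros Hp; simpl; f_equal; [field; exact Hp | apply Rinv_inv]. Qed.

Definition dominated (x y : R * R) : Prop :=
  let (p, u) := x in let (p', u') := y in
  0 < p < p' /\ 0 <= u' <= u /\ p * u <= p' * u'.

Lemma Phi_fst_cross_lt (x y : R * R) :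
  dominated x y -> fst (Phi x) * fst y < fst (Phi y) * fst x.
Proof.
  destruct x as [p u], y as [p' u']; unfold dominated, Phi; cbn [fst snd].
  intros (Hp & Hu & Hpu).
  (* q p' - q' p = p p' (p (u + 1) - p' (u' + 1)) - (p' - p) *)
  assert (Hlin : p * (u + 1) < p' * (u' + 1)) by nra.
  assert (p' * p * (p * (u + 1)) < p' * p * (p' * (u' + 1)))
    by (apply Rmult_lt_compat_l; nra).
  nra.
Qed.

Lemma Phi_dominated (x y : R * R) :
  dominated x y -> 0 < fst (Phi x) -> dominated (Phi x) (Phi y).
Proof.
  intros Hxy Hq. pose proof (Phi_fst_cross_lt x y Hxy) as Hcross.
  destruct x as [p u], y as [p' u']; unfold dominated, Phi in *; cbn [fst snd] in *.
  destruct Hxy as (Hp & _ & _).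
  set (q := p ^ 2 * (u + 1) - 1) in *; set (q' := p' ^ 2 * (u' + 1) - 1) in *.
  assert (Hqq : q < q') by nra.
  repeat split; try lra.
  - left; apply Rinv_0_lt_compat; lra.
  - apply Rinv_le_contravar; lra.
  - apply (Rmult_le_reg_r (p * p')); [nra|].
    replace (q * / p * (p * p')) with (q * p') by (field; lra).
    replace (q' * / p' * (p * p')) with (q' * p) by (field; lra).
    lra.
Qed.

Section Trajectory.

Variables (n : nat) (p u : nat -> R).
Hypothesis Ht : is_trajectory n p u.

Lemma trajectory_step (m : nat) : (m < n)%nat -> (p (S m), u (S m)) = Phi (p m, u m).
Proof.
  intros Hm. destruct Ht as (_ & _ & Hstep & _).
  rewrite (Hstep (S m)) by lia. now replace (S m - 1)%nat with m by lia.
Qed.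

Lemma trajectory_pos (m : nat) : (m < n)%nat -> 0 < p m.
Proof. destruct Ht as (_ & _ & _ & _ & Hpos). apply Hpos. Qed.

Lemma trajectory_reverse :
  is_trajectory n (fun j => u (n - j)%nat) (fun j => p (n - j)%nat).
Proof.
  pose proof Ht as (Hn & Hu0 & _ & Hpn & _).
  repeat split.
  - exact Hn.
  - now rewrite Nat.sub_0_r.
  - intros j Hj. set (m := (n - j)%nat).
    replace (n - (j - 1))%nat with (S m) by (unfold m; lia).
    change (u (S m), p (S m)) with (swap_sigma (p (S m), u (S m))).
    rewrite (trajectory_step m) by (unfold m; lia).
    rewrite Phi_swap_Phi; [reflexivity|].
    apply Rgt_not_eq, trajectory_pos; unfold m; lia.
  - now rewrite Nat.sub_diag.
  - intros j Hj. replace (n - j)%nat with (S (n - j - 1)) by lia.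
    assert (Hu : u (S (n - j - 1)) = / p (n - j - 1)%nat).
    { pose proof (trajectory_step (n - j - 1) ltac:(lia)) as Hstep. now injection Hstep. }
    rewrite Hu. apply Rinv_0_lt_compat, trajectory_pos. lia.
Qed.

End Trajectory.

Section Comparison.

Variables (n : nat) (p u p' u' : nat -> R).
Hypothesis Ht : is_trajectory n p u.
Hypothesis Ht' : is_trajectory n p' u'.

Lemma trajectory_dominated :
  p 0%nat < p' 0%nat ->
  forall j, (j < n)%nat -> dominated (p j, u j) (p' j, u' j).
Proof.
  intros H0. induction j as [|j IH]; intros Hj.
  - destruct Ht as (_ & Hu0 & _), Ht' as (_ & Hu0' & _); simpl.
    rewrite Hu0, Hu0'. pose proof (trajectory_pos n p u Ht 0 Hj). lra.
  - rewrite (trajectory_step n p u Ht j), (trajectory_step n p' u' Ht' j) by lia.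
    apply Phi_dominated; [apply IH; lia|].
    rewrite <- (trajectory_step n p u Ht j) by lia.
    apply (trajectory_pos n p u Ht); exact Hj.
Qed.

Lemma trajectory_not_lt : ~ p 0%nat < p' 0%nat.
Proof.
  intros H0. assert (Hn : (1 <= n)%nat) by (destruct Ht; lia).
  pose proof (Phi_fst_cross_lt _ _ (trajectory_dominated H0 (n - 1) ltac:(lia))) as Hcross.
  rewrite <- (trajectory_step n p u Ht (n - 1)), <- (trajectory_step n p' u' Ht' (n - 1))
    in Hcross by lia.
  replace (S (n - 1)) with n in Hcross by lia.
  destruct Ht as (_ & _ & _ & Hpn & _), Ht' as (_ & _ & _ & Hpn' & _).
  simpl in Hcross. rewrite Hpn, Hpn' in Hcross. lra.
Qed.

End Comparison.

Lemma trajectory_unique (n : nat) (p u p' u' : nat -> R) :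
  is_trajectory n p u -> is_trajectory n p' u' ->
  forall j, (j <= n)%nat -> (p j, u j) = (p' j, u' j).
Proof.
  intros Ht Ht'.
  assert (H0 : p 0%nat = p' 0%nat).
  { pose proof (trajectory_not_lt n p u p' u' Ht Ht').
    pose proof (trajectory_not_lt n p' u' p u Ht' Ht). lra. }
  induction j as [|j IH]; intros Hj.
  - destruct Ht as (_ & Hu0 & _), Ht' as (_ & Hu0' & _). now rewrite H0, Hu0, Hu0'.
  - rewrite (trajectory_step n p u Ht j), (trajectory_step n p' u' Ht' j) by lia.
    rewrite IH by lia. reflexivity.
Qed.

Lemma trajectory_palindrome (n : nat) (p u : nat -> R) :
  is_trajectory n p u -> forall j, (j <= n)%nat -> u j = p (n - j)%nat.
Proof.
  intros Ht j Hj.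
  pose proof (trajectory_unique n _ _ p u (trajectory_reverse n p u Ht) Ht (n - j) ltac:(lia))
    as Hrev.
  injection Hrev as Hrev _. now replace (n - (n - j))%nat with j in Hrev by lia.
Qed.

Theorem lemma3 :
  (* (a) Phi^{-1} = swap_sigma o Phi o swap_sigma wherever defined *)
  ((forall p u : R, p <> 0 -> swap_sigma (Phi (swap_sigma (Phi (p, u)))) = (p, u)) /\
   (forall p u : R, u <> 0 -> Phi (swap_sigma (Phi (swap_sigma (p, u)))) = (p, u))) /\
  (* (b) and (c) *)
  (forall (n : nat) (p u : nat -> R), is_trajectory n p u ->
     (forall j : nat, (j <= n)%nat -> u j = p (n - j)%nat) /\
     u n = p 0%nat /\
     (forall k : nat, n = (2 * k)%nat -> p k = u k) /\
     (forall k : nat, (1 <= k)%nat -> n = (2 * k - 1)%nat ->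
        p (k - 1)%nat = 1 /\ u k = 1)).
Proof.
  split.
  - split; intros p u Hnz.
    + now rewrite Phi_swap_Phi.
    + exact (Phi_swap_Phi u p Hnz).
  - intros n p u Ht. pose proof (trajectory_palindrome n p u Ht) as Hpal.
    split; [exact Hpal|].
    split; [now rewrite Hpal, Nat.sub_diag|].
    split.
    + intros k Hk. rewrite Hpal by lia. f_equal. lia.
    + intros k Hk1 Hk.
      (* u_k is both p_(k-1) and 1 / p_(k-1), so p_(k-1)^2 = 1 *)
      pose proof (Hpal k ltac:(lia)) as Hmid.
      replace (n - k)%nat with (k - 1)%nat in Hmid by lia.
      pose proof (trajectory_step n p u Ht (k - 1) ltac:(lia)) as Hstep.
      replace (S (k - 1)) with k in Hstep by lia. injection Hstep as _ Huk.
      pose proof (trajectory_pos n p u Ht (k - 1) ltac:(lia)) as Hpos.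
      assert (Hsq : p (k - 1)%nat * p (k - 1)%nat = 1).
      { rewrite <- Hmid at 1. rewrite Huk. field. lra. }
      assert (p (k - 1)%nat = 1) by nra.
      split; lra.
Qed.
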